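(* Let $\{W_i\}_{i=1}^M$ be subspaces of $\mathbb{R}^N$ such that $\sum_{i=1}^M\dim(W_i)=N$. Then $\{W_i\}_{i=1}^M$ does norm retrieval if and only if the subspaces $W_i$ are pairwise orthogonal.
   Context: A family of subspaces $\{W_i\}_{i=1}^M$ of $\mathbb{R}^N$ with orthogonal projections $\{P_i\}_{i=1}^M$ does norm retrieval if for all $x,y\in\mathbb{R}^N$, $\|P_ix\|=\|P_iy\|$ for all $i$ implies $\|x\|=\|y\|$. *)

(* Vectors of R^N are row vectors 'rV[R]_N, R : realType.
   A subspace of R^N is represented (as in mxalgebra) by a matrix whose row
   space is the subspace; u \in W is (u <= W)%MS. *)
From HB Require Import structures.
From mathcomp Require Import all_boot all_order all_algebra.
From mathcomp Require Import reals.
Set Implicit Arguments. Unset Strict Implicit. Unset Printing Implicit Defensive.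
Import Order.TTheory GRing.Theory Num.Theory.
Local Open Scope ring_scope.

Definition dotv (R : realType) (N : nat) (u v : 'rV[R]_N) : R :=
  (u *m v^T) 0 0.
Definition normv (R : realType) (N : nat) (u : 'rV[R]_N) : R :=
  Num.sqrt (dotv u u).

Definition is_orth_proj (R : realType) (N : nat) (W P : 'M[R]_N) : Prop :=
  forall x : 'rV[R]_N,
    (x *m P <= W)%MS /\
    (forall w : 'rV[R]_N, (w <= W)%MS -> dotv (x - x *m P) w = 0).

Definition norm_retrieval (R : realType) (N M : nat) (W : 'I_M -> 'M[R]_N)
  : Prop :=
  forall P : 'I_M -> 'M[R]_N, (forall i, is_orth_proj (W i) (P i)) ->
  forall x y : 'rV[R]_N,
    (forall i, normv (x *m P i) = normv (y *m P i)) -> normv x = normv y.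

Definition subspaces_pairwise_orthogonal (R : realType) (N M : nat)
  (W : 'I_M -> 'M[R]_N) : Prop :=
  forall i j : 'I_M, i != j ->
  forall u v : 'rV[R]_N, (u <= W i)%MS -> (v <= W j)%MS -> dotv u v = 0.

(* If the W_i are pairwise orthogonal and their dimensions add up to N, they
   decompose R^N orthogonally, so ||x||^2 = sum_i ||P_i x||^2 and the norms
   ||P_i x|| determine ||x||.
   Conversely, let B_i be the orthogonal complement of sum_(j != i) W_j. For
   x in B_i and v in B_j (i != j), each P_k kills x or v, so ||P_k (x + v)||
   = ||P_k (x - v)|| for all k; norm retrieval gives ||x + v|| = ||x - v||,
   i.e. x is orthogonal to v. Hence the B_i are pairwise orthogonal, and since
   dim B_i >= dim W_i they span R^N. A vector w of W_i is orthogonal to every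
   B_k with k != i, so its component outside B_i vanishes: W_i <= B_i, and the
   W_i inherit the pairwise orthogonality of the B_i. *)
From HB Require Import structures.
From mathcomp Require Import all_boot all_order all_algebra.
From mathcomp Require Import reals.
From mathcomp Require Import ring zify.
Set Implicit Arguments. Unset Strict Implicit. Unset Printing Implicit Defensive.
Import Order.TTheory GRing.Theory Num.Theory.
Local Open Scope ring_scope.

Section OrthogonalComplement.
Variables (R : realType) (N : nat).
Implicit Types (u v x : 'rV[R]_N).

Definition perp m (V : 'M[R]_(m, N)) : 'M[R]_N := kermx V^T.

Lemma dotvE u v : dotv u v = \sum_j u 0 j * v 0 j.
Proof. by rewrite /dotv mxE; apply: eq_bigr => j _; rewrite mxE. Qed.

Lemma dotvC u v : dotv u v = dotv v u.
Proof. by rewrite !dotvE; apply: eq_bigr => j _; rewrite mulrC. Qed.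

Lemma dotv_ge0 u : 0 <= dotv u u.
Proof. by rewrite dotvE; apply: sumr_ge0 => j _; rewrite -expr2 sqr_ge0. Qed.

Lemma dotv_suml (I : Type) (r : seq I) (P : pred I) (a : I -> 'rV[R]_N) v :
  dotv (\sum_(i <- r | P i) a i) v = \sum_(i <- r | P i) dotv (a i) v.
Proof.
rewrite dotvE; under eq_bigr => j _ do rewrite summxE mulr_suml.
by rewrite exchange_big; apply: eq_bigr => i _; rewrite dotvE.
Qed.

Lemma dotv_sumr (I : Type) (r : seq I) (P : pred I) (a : I -> 'rV[R]_N) u :
  dotv u (\sum_(i <- r | P i) a i) = \sum_(i <- r | P i) dotv u (a i).
Proof. by rewrite dotvC dotv_suml; apply: eq_bigr => i _; rewrite dotvC. Qed.

Lemma mulmx_trmx_eq0 m (A : 'M[R]_(m, N)) : A *m A^T = 0 -> A = 0.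
Proof.
move=> AAt0; apply/matrixP => i j; rewrite mxE.
have /matrixP /(_ i i) := AAt0; rewrite !mxE => /psumr_eq0P sq0.
have /eqP := sq0 (fun k _ => ltac:(by rewrite mxE -expr2 sqr_ge0)) j isT.
by rewrite mxE mulf_eq0 orbb => /eqP.
Qed.

Lemma sub_perpE m p (U : 'M[R]_(m, N)) (V : 'M[R]_(p, N)) :
  (U <= perp V)%MS = (U *m V^T == 0).
Proof. exact: sub_kermx. Qed.

Lemma sub_perpC m p (U : 'M[R]_(m, N)) (V : 'M[R]_(p, N)) :
  (U <= perp V)%MS = (V <= perp U)%MS.
Proof.
by rewrite !sub_perpE -[U *m _]trmxK trmx_mul trmxK -trmx0 (inj_eq trmx_inj).
Qed.

Lemma sub_perp_self m (U : 'M[R]_(m, N)) : (U <= perp U)%MS -> U = 0.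
Proof. by rewrite sub_perpE => /eqP; apply: mulmx_trmx_eq0. Qed.

Lemma perpS m p (V : 'M[R]_(m, N)) (V' : 'M[R]_(p, N)) :
  (V <= V')%MS -> (perp V' <= perp V)%MS.
Proof.
case/submxP => a ->; rewrite sub_perpE trmx_mul mulmxA.
by rewrite [_ *m V'^T]mulmx_ker mul0mx.
Qed.

Lemma sub_perpP p u (V : 'M[R]_(p, N)) :
  reflect (forall v, (v <= V)%MS -> dotv u v = 0) (u <= perp V)%MS.
Proof.
rewrite sub_perpE; apply: (iffP eqP) => [uV0 v /submxP [a ->] | u_perp].
  by rewrite /dotv trmx_mul mulmxA uV0 mul0mx mxE.
apply/matrixP => i k; rewrite !ord1 [RHS]mxE -(u_perp (row k V)) ?row_sub //.
by rewrite /dotv !mxE; apply: eq_bigr => l _; rewrite !mxE.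
Qed.

Lemma sub_perp_full m p (V : 'M[R]_(m, N)) (U : 'M[R]_(p, N)) :
  row_full V -> (U <= perp V)%MS -> U = 0.
Proof.
move=> fullV UV; apply: sub_perp_self.
by apply: submx_trans (submx_full _ fullV) _; rewrite sub_perpC.
Qed.

Lemma mxrank_perp m (V : 'M[R]_(m, N)) : \rank (perp V) = (N - \rank V)%N.
Proof. by rewrite mxrank_ker mxrank_tr. Qed.

Lemma row_full_addsmx_perp (V : 'M[R]_N) : row_full (V + perp V)%MS.
Proof.
have capV0 : (V :&: perp V)%MS = 0.
  apply: sub_perp_self; apply: submx_trans (capmxSl _ _) _.
  by rewrite sub_perpC capmxSr.
by rewrite /row_full mxrank_disjoint_sum // mxrank_perp subnKC // rank_leq_col.
Qed.

End OrthogonalComplement.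

Section Norm.
Variables (R : realType) (N : nat).
Implicit Types (u v : 'rV[R]_N).

Lemma normv_sqr u : normv u ^+ 2 = dotv u u.
Proof. by rewrite /normv sqr_sqrtr // dotv_ge0. Qed.

Lemma eq_normv u v : normv u = normv v <-> dotv u u = dotv v v.
Proof. by split => [uv | uv]; [rewrite -!normv_sqr uv | rewrite /normv uv]. Qed.

Lemma normvN u : normv (- u) = normv u.
Proof.
by apply/eq_normv; rewrite !dotvE; apply: eq_bigr => j _; rewrite !mxE mulrNN.
Qed.

Lemma dotv_polarization u v :
  dotv (u + v) (u + v) - dotv (u - v) (u - v) = 4%:R * dotv u v.
Proof.
by rewrite !dotvE -sumrB mulr_sumr; apply: eq_bigr => j _; rewrite !mxE; ring.
Qed.

Lemma normvDB_dotv_eq0 u v : normv (u + v) = normv (u - v) -> dotv u v = 0.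
Proof.
move/eq_normv/eqP; rewrite -subr_eq0 dotv_polarization mulf_eq0 pnatr_eq0 /=.
by move/eqP.
Qed.

Lemma dotv_sum_orthogonal (I : finType) (a : I -> 'rV[R]_N) :
  (forall i j, i != j -> dotv (a i) (a j) = 0) ->
  dotv (\sum_i a i) (\sum_i a i) = \sum_i dotv (a i) (a i).
Proof.
move=> a_orth; rewrite dotv_suml; apply: eq_bigr => i _.
by rewrite dotv_sumr (bigD1 i) //= big1 ?addr0 // => j ji; rewrite a_orth // eq_sym.
Qed.

End Norm.

Section OrthogonalProjection.
Variables (R : realType) (N : nat) (W P : 'M[R]_N).
Hypothesis WP : is_orth_proj W P.
Implicit Types (x : 'rV[R]_N).

Lemma orth_proj_sub x : (x *m P <= W)%MS.
Proof. by case: (WP x). Qed.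

Lemma orth_proj_compl x : (x - x *m P <= perp W)%MS.
Proof. by case: (WP x) => _ /sub_perpP. Qed.

Lemma orth_proj_perp x : (x <= perp W)%MS -> x *m P = 0.
Proof.
move=> xW; apply: sub_perp_self.
apply: submx_trans (orth_proj_sub x) _; rewrite sub_perpC.
have -> : x *m P = x - (x - x *m P) by rewrite opprB addrCA subrr addr0.
rewrite addmx_sub // eqmx_opp.
exact: orth_proj_compl.
Qed.

End OrthogonalProjection.

Lemma orth_proj_mx (R : realType) (N : nat) (W : 'M[R]_N) :
  is_orth_proj W (proj_mx W (perp W)).
Proof.
move=> x; split; first exact: proj_mx_sub.
apply/sub_perpP.
by rewrite proj_mx_compl_sub // submx_full // row_full_addsmx_perp.
Qed.

Section OrthogonalFamily.
Variables (R : realType) (N : nat) (I : finType) (U : I -> 'M[R]_N).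

Definition pairwise_perp := forall i j, i != j -> (U i <= perp (U j))%MS.

Hypothesis Uperp : pairwise_perp.

Lemma mxdirect_pairwise_perp : mxdirect (\sum_i U i).
Proof.
apply/mxdirect_sumsP => i _; set Z := (_ :&: _)%MS.
have ZUi : (Z <= U i)%MS by apply: capmxSl.
have Zperp : (Z <= perp (U i))%MS.
  apply: submx_trans (capmxSr _ _) _.
  by apply/sumsmx_subP => j /= ji; rewrite Uperp // eq_sym.
by apply: sub_perp_self; apply: submx_trans ZUi _; rewrite sub_perpC.
Qed.

Lemma mxrank_sum_pairwise_perp : \rank (\sum_i U i) = (\sum_i \rank (U i))%N.
Proof. exact/eqnP/mxdirect_pairwise_perp. Qed.

Lemma row_full_sum_pairwise_perp :
  (N <= \sum_i \rank (U i))%N -> row_full (\sum_i U i).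
Proof. by rewrite /row_full eqn_leq rank_leq_col mxrank_sum_pairwise_perp. Qed.

Hypothesis Ufull : row_full (\sum_i U i).

Lemma sub_perp_all_but i p (V : 'M[R]_(p, N)) :
  (forall k, k != i -> (V <= perp (U k))%MS) -> (V <= U i)%MS.
Proof.
move=> VU; have := submx_full V Ufull.
rewrite (bigD1 i) //=.
set C := (\sum_(k | k != i) U k)%MS; case/sub_addsmxP => a defV.
have CV : (V <= perp C)%MS.
  by rewrite sub_perpC; apply/sumsmx_subP => k ki; rewrite sub_perpC VU.
have CUi : (U i <= perp C)%MS.
  by rewrite sub_perpC; apply/sumsmx_subP => k ki; apply: Uperp.
suff aC0 : a.2 *m C = 0 by rewrite defV aC0 addr0 submxMl.
apply: sub_perp_self; apply: submx_trans (submxMl _ _) _; rewrite sub_perpC.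
have -> : a.2 *m C = V - a.1 *m U i by rewrite defV addrC addKr.
by rewrite addmx_sub // eqmx_opp (submx_trans (submxMl _ _)).
Qed.

Variable P : I -> 'M[R]_N.
Hypothesis UP : forall i, is_orth_proj (U i) (P i).

Lemma sum_orth_proj (x : 'rV[R]_N) : \sum_i x *m P i = x.
Proof.
apply/esym/eqP; rewrite -subr_eq0; apply/eqP/(sub_perp_full Ufull).
rewrite sub_perpC; apply/sumsmx_subP => i _; rewrite sub_perpC.
rewrite (bigD1 i) //= opprD addrA addmx_sub ?(orth_proj_compl (UP i)) //.
rewrite eqmx_opp summx_sub // => k ki.
exact: submx_trans (orth_proj_sub (UP k) x) (Uperp ki).
Qed.

Lemma dotv_orth_proj_sum (x : 'rV[R]_N) : dotv x x = \sum_i normv (x *m P i) ^+ 2.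
Proof.
rewrite -{1 2}(sum_orth_proj x) dotv_sum_orthogonal.
  by apply: eq_bigr => i _; rewrite normv_sqr.
move=> i j ij; move/sub_perpP: (submx_trans (orth_proj_sub (UP i) x) (Uperp ij)).
by apply; apply: orth_proj_sub.
Qed.

End OrthogonalFamily.

Lemma pairwise_perpP (R : realType) (N M : nat) (W : 'I_M -> 'M[R]_N) :
  subspaces_pairwise_orthogonal W <-> pairwise_perp W.
Proof.
split => Wperp i j ij.
  by apply/row_subP => r; apply/sub_perpP => v; apply: Wperp ij _ _ (row_sub r _).
by move=> u v Wu; move/sub_perpP: (submx_trans Wu (Wperp i j ij)); apply.
Qed.

Lemma pairwise_perp_norm_retrieval (R : realType) (N M : nat)
    (W : 'I_M -> 'M[R]_N) :
  (\sum_(i < M) \rank (W i))%N = N -> pairwise_perp W -> norm_retrieval W.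
Proof.
move=> rkW Wperp P WP x y Pxy; apply/eq_normv.
have Wfull := row_full_sum_pairwise_perp Wperp (eq_leq (esym rkW)).
rewrite !(dotv_orth_proj_sum Wperp Wfull WP).
by apply: eq_bigr => i _; rewrite Pxy.
Qed.

Section NormRetrievalPairwisePerp.
Variables (R : realType) (N M : nat) (W : 'I_M -> 'M[R]_N).
Hypotheses (rkW : (\sum_(i < M) \rank (W i))%N = N) (NR : norm_retrieval W).

Definition perp_others i : 'M[R]_N := perp (\sum_(j | j != i) W j)%MS.

Lemma perp_others_perp i k : k != i -> (perp_others i <= perp (W k))%MS.
Proof. by move=> ki; apply/perpS/(sumsmx_sup k). Qed.

Lemma perp_others_pairwise_perp : pairwise_perp perp_others.
Proof.
pose P i := proj_mx (W i) (perp (W i)).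
have WP i : is_orth_proj (W i) (P i) by apply: orth_proj_mx.
move=> i j ij; apply/row_subP => r; apply/sub_perpP => v Bv.
set x := row r (perp_others i); have Bx : (x <= perp_others i)%MS := row_sub r _.
apply/normvDB_dotv_eq0/(NR WP) => k; rewrite mulmxDl mulmxBl.
have [-> | ki] := eqVneq k i.
  have Bv_ker : v *m P i = 0.
    exact: (orth_proj_perp (WP i) (submx_trans Bv (perp_others_perp ij))).
  by rewrite Bv_ker addr0 subr0.
have Bx_ker : x *m P k = 0.
  exact: (orth_proj_perp (WP k) (submx_trans Bx (perp_others_perp ki))).
by rewrite Bx_ker add0r sub0r normvN.
Qed.

Lemma mxrank_le_perp_others i : (\rank (W i) <= \rank (perp_others i))%N.
Proof.
rewrite mxrank_perp.
have le_sum : (\rank (\sum_(j | j != i) W j)%MS <= \sum_(j | j != i) \rank (W j))%N.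
  exact: (mxrank_sum_leqif _).1.
have : (\rank (W i) + \sum_(j | j != i) \rank (W j))%N = N.
  by rewrite -[RHS]rkW [RHS](bigD1 i).
lia.
Qed.

Lemma sub_perp_others i : (W i <= perp_others i)%MS.
Proof.
have Bfull : row_full (\sum_i perp_others i).
  apply: (row_full_sum_pairwise_perp perp_others_pairwise_perp).
  by rewrite -{1}rkW; apply: leq_sum => k _; apply: mxrank_le_perp_others.
apply: (sub_perp_all_but perp_others_pairwise_perp Bfull) => k ki.
by rewrite sub_perpC perp_others_perp // eq_sym.
Qed.

Lemma norm_retrieval_pairwise_perp : pairwise_perp W.
Proof.
move=> i j ij; apply: submx_trans (sub_perp_others i) _.
exact: submx_trans (perp_others_pairwise_perp ij) (perpS (sub_perp_others j)).
Qed.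

End NormRetrievalPairwisePerp.

Theorem mainTheorem8 (R : realType) (N M : nat) (W : 'I_M -> 'M[R]_N) :
  (\sum_(i < M) \rank (W i))%N = N ->
  (norm_retrieval W <-> subspaces_pairwise_orthogonal W).
Proof.
move=> rkW; rewrite pairwise_perpP; split.
  exact: norm_retrieval_pairwise_perp.
exact: pairwise_perp_norm_retrieval.
Qed.
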